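(* Let $\mathcal P$ be a σ-convex, pre-Hahn-localizable family of probability measures on $(\Omega,\mathcal F)$, with localization $\mathcal Q$ and supports $\{S_Q\}_{Q\in\mathcal Q}$. The following are equivalent: (1) $\mathcal P$ is Hahn-localizable (with respect to $\mathcal Q$ and $\{S_Q\}$); (2) $\mathbb L^\infty(\mathcal P)$, ordered by $f\le g$ iff $f\le g$ $\mathcal P$-q.s., is Dedekind complete; (3) for every $\mathcal P$-q.s. uniformly bounded family $\{g_Q\}_{Q\in\mathcal Q}$ of non-negative $\mathcal F$-measurable functions with $g_Q=0$ $\mathcal P$-q.s. on $\Omega\setminus S_Q$, there is $g\in\mathcal L^\infty(\mathcal P)$ with $g\mathbf 1_{S_Q}=g_Q\mathbf 1_{S_Q}$ $\mathcal P$-q.s. for every $Q\in\mathcal Q$.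
   Context: $\mathcal P$ is σ-convex if it is closed under countable convex combinations. A set is $\mathcal P$-polar if contained in some $N\in\mathcal F$ with $P(N)=0$ for all $P\in\mathcal P$; $\mathcal P$-q.s. means outside a polar set. $\mathcal L^\infty(\mathcal P)$ is the set of $\mathcal F$-measurable real functions bounded $\mathcal P$-q.s.; $\mathbb L^\infty(\mathcal P)$ is its quotient by $\mathcal P$-q.s. equality. Dedekind complete: every nonempty subset bounded above has a least upper bound. $\mathcal P\lll\mathcal Q$ means each $P\in\mathcal P$ is absolutely continuous w.r.t. some $Q\in\mathcal Q$; $\mathrm{sconv}(\mathcal Q)$ denotes countable convex combinations. $\mathcal P$ is pre-Hahn-localizable with localization $\mathcal Q$ (probability measures on $\mathcal F$) and supports $S_Q\in\mathcal F$ if $Q(S_R)=\delta_{QR}$ for $Q,R\in\mathcal Q$ and $\mathcal Q\lll\mathcal P\lll\mathrm{sconv}(\mathcal Q)$. It is Hahn-localizable (w.r.t. $\mathcal Q$, $\{S_Q\}$) if for every family $E_Q\in\mathcal F$, $E_Q\subseteq S_Q$, there is $S\in\mathcal F$ with $Q(E_Q\setminus S)=0$ for all $Q\in\mathcal Q$, and such that any $F\in\mathcal F$ with $Q(E_Q\setminus F)=0$ for all $Q$ satisfies $Q(S\setminus F)=0$ for all $Q$. *)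

From HB Require Import structures.
From mathcomp Require Import all_boot all_order all_algebra.
From mathcomp Require Import all_classical all_reals all_analysis.
Set Implicit Arguments. Unset Strict Implicit. Unset Printing Implicit Defensive.
Import Order.TTheory GRing.Theory Num.Theory.
Local Open Scope classical_set_scope.
Local Open Scope ring_scope.

Section Defs.
Context {d : measure_display} {T : measurableType d} {R : realType}.

Definition cc_weights (a : nat -> R) : Prop :=
  (forall n, 0 <= a n) /\ (\sum_(n <oo) (a n)%:E = 1)%E.

Definition is_ccomb (mu : set T -> \bar R) (Pn : nat -> probability T R)
  (a : nat -> R) : Prop :=
  forall A, measurable A -> mu A = (\sum_(n <oo) ((a n)%:E * Pn n A))%E.

Definition sigma_convex (Fam : set (probability T R)) : Prop :=
  forall (Pn : nat -> probability T R) (a : nat -> R),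
    (forall n, Fam (Pn n)) -> cc_weights a ->
    exists P' : probability T R, Fam P' /\ is_ccomb P' Pn a.

Definition sconv (Qs : set (probability T R)) : set (set T -> \bar R) :=
  [set mu | exists (Qn : nat -> probability T R) (a : nat -> R),
     (forall n, Qs (Qn n)) /\ cc_weights a /\ is_ccomb mu Qn a].

Definition abs_cont (mu nu : set T -> \bar R) : Prop :=
  forall A, measurable A -> nu A = 0%E -> mu A = 0%E.

Definition pre_hahn_localizable (Fam Qs : set (probability T R))
  (S : probability T R -> set T) : Prop :=
  (forall Q, Qs Q -> measurable (S Q)) /\
  (forall Q Q', Qs Q -> Qs Q' ->
     (Q = Q' -> Q (S Q') = 1%E) /\ (Q <> Q' -> Q (S Q') = 0%E)) /\
  (forall Q, Qs Q -> exists P, Fam P /\ abs_cont Q P) /\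
  (forall P, Fam P -> exists mu, sconv Qs mu /\ abs_cont P mu).

Definition polar (Fam : set (probability T R)) (N : set T) : Prop :=
  exists M, measurable M /\ N `<=` M /\ forall P, Fam P -> P M = 0%E.

Definition qs (Fam : set (probability T R)) (p : T -> Prop) : Prop :=
  polar Fam [set x | ~ p x].

Definition Linf (Fam : set (probability T R)) (f : T -> R) : Prop :=
  measurable_fun setT f /\ exists c : R, qs Fam (fun x => `|f x| <= c).

(* Dedekind completeness of \mathbb L^\infty(Fam) with the q.s. order,
   stated on representatives *)
Definition Linf_dedekind_complete (Fam : set (probability T R)) : Prop :=
  forall A : set (T -> R), A `<=` Linf Fam -> A !=set0 ->
    (exists h, Linf Fam h /\ forall f, A f -> qs Fam (fun x => f x <= h x)) ->
    exists g, Linf Fam g /\ (forall f, A f -> qs Fam (fun x => f x <= g x)) /\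
      (forall h, Linf Fam h -> (forall f, A f -> qs Fam (fun x => f x <= h x)) ->
         qs Fam (fun x => g x <= h x)).

Definition hahn_localizable (Qs : set (probability T R))
  (S : probability T R -> set T) : Prop :=
  forall E : probability T R -> set T,
    (forall Q, Qs Q -> measurable (E Q) /\ E Q `<=` S Q) ->
    exists S0, measurable S0 /\
      (forall Q, Qs Q -> Q (E Q `\` S0) = 0%E) /\
      (forall F, measurable F -> (forall Q, Qs Q -> Q (E Q `\` F) = 0%E) ->
         forall Q, Qs Q -> Q (S0 `\` F) = 0%E).

Definition gluing_property (Fam Qs : set (probability T R))
  (S : probability T R -> set T) : Prop :=
  forall g : probability T R -> T -> R,
    (forall Q, Qs Q -> measurable_fun setT (g Q) /\ forall x, 0 <= g Q x) ->
    (exists c : R, forall Q, Qs Q -> qs Fam (fun x => g Q x <= c)) ->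
    (forall Q, Qs Q -> qs Fam (fun x => ~ S Q x -> g Q x = 0)) ->
    exists g0, Linf Fam g0 /\
      forall Q, Qs Q ->
        qs Fam (fun x => g0 x * \1_(S Q) x = g Q x * \1_(S Q) x).

End Defs.

(* Since Qs <<< Fam <<< sconv Qs, the polar sets are the measurable sets that
   are null for every Q in Qs; as Q lives on its support S Q, which is null for
   the other members of Qs, a quasi-sure statement only has to be checked
   Q-almost surely on S Q, one Q at a time.
   (1) -> (3): localize the super-level sets S Q `&` {g Q > r} for every rational
   level r; the glued function is rebuilt from the countably many localized sets
   as the supremum of the levels they contain.
   (3) -> (2): clip a family bounded above in L^oo to a uniformly bounded one.
   Under a single probability Q it has an essential supremum, attained by a
   countable subfamily (essential unions of its super-level sets); gluing these
   suprema along the supports gives the quasi-sure supremum.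
   (2) -> (1): if g is the supremum of the indicators of the E Q, then {g > 1/2}
   is the required localized supremum. *)

From mathcomp Require Import all_boot all_order all_algebra.
From mathcomp Require Import all_classical all_reals all_analysis.
From mathcomp Require Import measurable_realfun lra.
Set Implicit Arguments. Unset Strict Implicit. Unset Printing Implicit Defensive.
Import Order.TTheory GRing.Theory Num.Theory.
Local Open Scope classical_set_scope.
Local Open Scope ring_scope.

Section ae_negligible.
Context d (T : measurableType d) (R : realType) (mu : {measure set T -> \bar R}).

Lemma negligible_ae (N : set T) : mu.-negligible N -> {ae mu, forall x, ~ N x}.
Proof. by apply: negligibleS => x /= /contrapT. Qed.

Lemma null_set_ae (N : set T) : measurable N -> mu N = 0%E -> {ae mu, forall x, ~ N x}.
Proof. by move=> mN muN; apply: negligible_ae; exists N; split. Qed.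

Lemma ae_negligible (N : set T) : {ae mu, forall x, ~ N x} -> mu.-negligible N.
Proof. by apply: negligibleS => x /= Nx; apply. Qed.

Lemma ae_foralln (P : nat -> T -> Prop) :
  (forall n, {ae mu, forall x, P n x}) -> {ae mu, forall x, forall n, P n x}.
Proof.
by move=> aeP; apply: negligibleS (negligible_bigcup aeP) => x /= /existsNP[n]; exists n.
Qed.

End ae_negligible.

Section measurable_comparison.
Context d (T : measurableType d) (R : realType).
Implicit Types f g : T -> R.

Lemma measurable_ltr f g : measurable_fun setT f -> measurable_fun setT g ->
  measurable [set x | f x < g x].
Proof.
move=> mf mg; rewrite -[X in measurable X]setTI -[X in _ `&` X]preimage_true.
exact: measurable_fun_ltr.
Qed.

Lemma measurable_neqr f g : measurable_fun setT f -> measurable_fun setT g ->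
  measurable [set x | f x <> g x].
Proof.
move=> mf mg; have -> : [set x | f x <> g x] = [set x | f x < g x] `|` [set x | g x < f x].
  apply/seteqP; split => x /=; first by move/eqP; rewrite neq_lt => /orP.
  by case=> [/lt_eqF|/gt_eqF] /negbT/eqP.
by apply: measurableU; exact: measurable_ltr.
Qed.

End measurable_comparison.

Section rational_levels.
Context (R : realType).

Definition rat_level (c : R) (n : nat) : R :=
  Num.min (Num.max (if @unpickle rat n is Some q then ratr q else 0) 0) c.

Variable c : R.

Lemma rat_level_le n : rat_level c n <= c.
Proof. by rewrite /rat_level ge_min lexx orbT. Qed.

Lemma rat_level_dense y z : 0 <= y -> y < z -> z <= c ->
  exists n, y < rat_level c n < z.
Proof.
move=> y0 yz zc; have [q] := rat_in_itvoo yz; rewrite in_itv /= => /andP[yq qz].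
exists (pickle q); rewrite /rat_level pickleK.
rewrite max_l ?(le_trans y0 (ltW yq)) // min_l ?(le_trans (ltW qz) zc) //.
by rewrite yq qz.
Qed.

Hypothesis c0 : 0 <= c.

Lemma rat_level_ge0 n : 0 <= rat_level c n.
Proof. by rewrite /rat_level le_min c0 le_max lexx orbT. Qed.

End rational_levels.

Section level_sup.
Context d (T : measurableType d) (R : realType).
Variables (c : R) (D : nat -> set T).

Definition level_sup (x : T) : R :=
  sup (range (fun n => rat_level c n * \1_(D n) x)).

Let level_term_in n x : D n x -> rat_level c n * \1_(D n) x = rat_level c n.
Proof. by move=> Dx; rewrite indicE mem_set // mulr1. Qed.

Let level_term_out n x : ~ D n x -> rat_level c n * \1_(D n) x = 0.
Proof. by move=> Dx; rewrite indicE memNset // mulr0. Qed.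

Let level_sup_has_ubound x :
  has_ubound (range (fun n => rat_level c n * \1_(D n) x)).
Proof.
exists `|c| => _ [n _ <-]; have [Dx|Dx] := pselect (D n x).
  by rewrite level_term_in // (le_trans (rat_level_le c n)) // ler_norm.
by rewrite level_term_out.
Qed.

Let level_sup_ub x n : rat_level c n * \1_(D n) x <= level_sup x.
Proof. by apply: (ub_le_sup (level_sup_has_ubound x)); exists n. Qed.

Lemma level_sup_le x y : 0 <= y -> (forall n, D n x -> rat_level c n <= y) ->
  level_sup x <= y.
Proof.
move=> y0 Dy; apply: ge_sup; first by exists (rat_level c 0 * \1_(D 0) x), 0%N.
move=> _ [n _ <-]; have [Dx|Dx] := pselect (D n x); last by rewrite level_term_out.
by rewrite level_term_in // Dy.
Qed.

Lemma measurable_level_sup : (forall n, measurable (D n)) ->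
  measurable_fun setT level_sup.
Proof.
move=> mD; have -> : level_sup = fun x => sups (fun n => rat_level c n * \1_(D n) x) 0.
  apply/funext => x; rewrite /level_sup /sups /=; congr sup.
  by apply/seteqP; split => _ [n _ <-]; exists n.
apply: measurable_fun_sups => [x _|n]; first exact: level_sup_has_ubound.
by apply: measurable_funM => //; exact: measurable_indic.
Qed.

Hypothesis c0 : 0 <= c.

Lemma level_sup_ge0 x : 0 <= level_sup x.
Proof.
apply: le_trans (level_sup_ub x 0).
by rewrite mulr_ge0 ?rat_level_ge0 // indicE.
Qed.

Lemma level_sup_lec x : level_sup x <= c.
Proof. by apply: level_sup_le => // n _; exact: rat_level_le. Qed.

Lemma level_sup_ge x y : 0 <= y -> y <= c ->
  (forall n, rat_level c n < y -> D n x) -> y <= level_sup x.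
Proof.
move=> y0 yc Dy; rewrite leNgt; apply/negP => supy.
have [n /andP[supn ny]] := rat_level_dense (level_sup_ge0 x) supy yc.
have := level_sup_ub x n; rewrite level_term_in; last exact: Dy.
by move=> /(lt_le_trans supn); rewrite ltxx.
Qed.

Lemma level_sup_eq x y : 0 <= y -> y <= c ->
  (forall n, rat_level c n < y <-> D n x) -> level_sup x = y.
Proof.
move=> y0 yc Dy; apply/le_anti/andP; split.
  by apply: level_sup_le => // n /Dy /ltW.
by apply: level_sup_ge => // n /Dy.
Qed.

End level_sup.

Section essential_union.
Context d (T : measurableType d) (R : realType) (Q : probability T R).
Context (I : Type) (P : I -> Prop) (B : I -> set T).
Hypothesis mB : forall i, P i -> measurable (B i).

Let measurable_subunion (j : nat -> I) : (forall k, P (j k)) ->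
  measurable (\bigcup_k B (j k)).
Proof. by move=> Pj; apply: bigcup_measurable => k _; exact: mB. Qed.

Lemma max_measure_subunion i0 : P i0 ->
  exists j : nat -> I, (forall k, P (j k)) /\
    forall j' : nat -> I, (forall k, P (j' k)) ->
      (Q (\bigcup_k B (j' k)) <= Q (\bigcup_k B (j k)))%E.
Proof.
move=> Pi0.
pose V := [set Q (\bigcup_k B (j k)) | j in [set j : nat -> I | forall k, P (j k)]].
have [|u Vu u_sup] := @ereal_sup_seq _ V.
  by apply/set0P; exists (Q (\bigcup_(k : nat) B i0)), (fun=> i0).
have uV n : exists j : nat -> I, (forall k, P (j k)) /\ Q (\bigcup_k B (j k)) = u n.
  by have [j Pj <-] := Vu n; exists j.
have [J HJ] := choice uV.
(* the maximising sequences [J m] are merged into a single one *)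
pose js n := if @unpickle (nat * nat)%type n is Some (m, k) then J m k else J 0%N 0%N.
have Pjs n : P (js n).
  by rewrite /js; case: unpickle => [[m k]|]; [case: (HJ m) | case: (HJ 0%N)].
have u_le m : (u m <= Q (\bigcup_n B (js n)))%E.
  rewrite -(HJ m).2; apply: le_measure; rewrite ?inE.
  - exact: measurable_subunion (HJ m).1.
  - exact: measurable_subunion.
  - by move=> x [k _ Bx]; exists (pickle (m, k)) => //; rewrite /js pickleK.
exists js; split => // j' Pj'.
have : (Q (\bigcup_k B (j' k)) <= ereal_sup V)%E by apply: ereal_sup_ubound; exists j'.
move/le_trans; apply.
rewrite -(cvg_lim _ u_sup) //; apply: lime_le; first by apply/cvg_ex; exists (ereal_sup V).
exact: nearW.
Qed.

Lemma countable_essential_union i0 : P i0 ->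
  exists j : nat -> I, (forall k, P (j k)) /\
    forall i, P i -> {ae Q, forall x, B i x -> (\bigcup_k B (j k)) x}.
Proof.
move=> Pi0; have [j [Pj jmax]] := max_measure_subunion Pi0.
exists j; split => // i Pi; set U := \bigcup_k B (j k).
have mU : measurable U := measurable_subunion Pj.
have mBU : measurable (B i `\` U) by apply: measurableD => //; exact: mB.
suff /negligible_ae : Q.-negligible (B i `\` U).
  by apply: filterS => x notBU Bx; apply: contrapT => Ux; exact: notBU.
apply/negligibleP => //; apply/eqP; rewrite eq_le measure_ge0 andbT.
pose j' n := if n is n'.+1 then j n' else i.
have Pj' k : P (j' k) by case: k.
have UBU : U `|` (B i `\` U) = \bigcup_k B (j' k).
  apply/seteqP; split => x.
    by case=> [[k _ Bx]|[Bx _]]; [exists k.+1 | exists 0%N].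
  case=> -[|k] _ /= Bx; last by left; exists k.
  by have [Ux|Ux] := pselect (U x); [left|right].
have QUfin : Q U \is a fin_num.
  by rewrite ge0_fin_numE ?measure_ge0 // (le_lt_trans (probability_le1 _ mU)) ?ltey.
have := jmax j' Pj'; rewrite -UBU measureU //; last first.
  by rewrite setDE setICA setICr setI0.
by rewrite -[leRHS]adde0 leeD2lE.
Qed.

End essential_union.

Section clip.
Context (R : realType).
Variables (a b : R).

Definition clip (y : R) : R := Num.min (Num.max y (- a)) b + a.

Lemma clip_le y : clip y <= b + a.
Proof. by rewrite /clip lerD2r ge_min lexx orbT. Qed.

Lemma clipB_le y z : - a <= z -> y <= z -> clip y - a <= z.
Proof. by move=> az yz; rewrite /clip addrK ge_min ge_max az yz. Qed.

Lemma le_clipB y : y <= b -> y <= clip y - a.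
Proof. by move=> yb; rewrite /clip addrK le_min le_max lexx yb. Qed.

Lemma clip_ge0 y : 0 <= a -> 0 <= b -> 0 <= clip y.
Proof.
move=> a0 b0; rewrite /clip -lerBlDr sub0r le_min le_max lexx orbT /=.
by rewrite (le_trans _ b0) // oppr_le0.
Qed.

Lemma measurable_clip d (T : measurableType d) (f : T -> R) :
  measurable_fun setT f -> measurable_fun setT (clip \o f).
Proof.
move=> mf; have -> : clip \o f = ((f \max cst (- a)) \min cst b) \+ cst a by [].
by apply: measurable_funD => //; apply: measurable_minr => //; exact: measurable_maxr.
Qed.

End clip.

Section probability_ess_sup.
Context d (T : measurableType d) (R : realType) (Q : probability T R).
Context (I : Type) (A : set I) (F : I -> T -> R) (K : R).
Hypotheses (K0 : 0 <= K) (mF : forall i, A i -> measurable_fun setT (F i)).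
Hypothesis F_bounds : forall i x, A i -> 0 <= F i x <= K.

Lemma probability_ess_sup i0 : A i0 ->
  exists g : T -> R, [/\ measurable_fun setT g, forall x, 0 <= g x <= K,
    forall i, A i -> {ae Q, forall x, F i x <= g x} &
    exists j : nat -> nat -> I, (forall n k, A (j n k)) /\
      forall x y, 0 <= y -> (forall n k, F (j n k) x <= y) -> g x <= y].
Proof.
move=> Ai0; pose B n i := [set x | rat_level K n < F i x].
have mB n i : A i -> measurable (B n i).
  by move=> Ai; apply: measurable_ltr => //; exact: mF.
have [J HJ] := choice (fun n => countable_essential_union Q (mB n) Ai0).
pose D n := \bigcup_k B n (J n k).
have mD n : measurable (D n).
  by apply: bigcup_measurable => k _; apply: mB; exact: (HJ n).1.
exists (level_sup K D); split.
- exact: measurable_level_sup.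
- by move=> x; rewrite level_sup_ge0 ?level_sup_lec.
- move=> i Ai; apply: filterS (ae_foralln (fun n => (HJ n).2 i Ai)) => x BD.
  by have /andP[? ?] := F_bounds x Ai; exact: level_sup_ge.
- exists J; split=> [n k|x y y0 Jy]; first exact: (HJ n).1.
  apply: level_sup_le => // n [k _ ltJ].
  exact: ltW (lt_le_trans ltJ (Jy n k)).
Qed.

End probability_ess_sup.

Section pre_hahn_localizable.
Context d (T : measurableType d) (R : realType).
Variables (Fam Qs : set (probability T R)) (S : probability T R -> set T).
Hypothesis hP : pre_hahn_localizable Fam Qs S.
Implicit Types (Q : probability T R) (p : T -> Prop).

Lemma measurable_support Q : Qs Q -> measurable (S Q).
Proof. by case: hP => + _; apply. Qed.

Lemma ae_support Q : Qs Q -> {ae Q, forall x, S Q x}.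
Proof.
move=> HQ; have mS := measurable_support HQ.
exists (~` S Q); split => //; first exact: measurableC.
rewrite probability_setC //.
by case: hP => _ [+ _] => /(_ Q Q HQ HQ) [QS _]; rewrite QS // subee.
Qed.

Lemma ae_other_support Q Q' : Qs Q -> Qs Q' -> Q <> Q' ->
  {ae Q', forall x, ~ S Q x}.
Proof.
move=> HQ HQ' QQ'; apply: negligible_ae; apply/negligibleP.
  exact: measurable_support.
by case: hP => _ [+ _] => /(_ Q' Q HQ' HQ) [_]; apply; exact: nesym.
Qed.

Lemma qs_ae p Q : qs Fam p -> Qs Q -> {ae Q, forall x, p x}.
Proof.
move=> [M [mM [pM FamM]]] HQ; case: hP => _ [_ [+ _]] => /(_ Q HQ) [P [FP QP]].
by exists M; split => //; apply: QP => //; exact: FamM.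
Qed.

Lemma qs_on_supports p M : measurable M -> [set x | ~ p x] `<=` M ->
  (forall Q, Qs Q -> {ae Q, forall x, S Q x -> ~ M x}) -> qs Fam p.
Proof.
move=> mM pM notM; exists M; split => //; split => // P FP.
case: hP => _ [_ [_ +]] => /(_ P FP) [mu [[Qn [a [Qsn [_ mu_Qn]]]] Pmu]].
apply: Pmu => //; rewrite mu_Qn //; apply: eseries0 => n _ _.
suff /(measure_negligible mM) -> : (Qn n).-negligible M by rewrite mule0.
apply: ae_negligible; apply: filterS2 (ae_support (Qsn n)) (notM _ (Qsn n)).
by move=> x Sx; apply.
Qed.

Lemma qsW p : (forall x, p x) -> qs Fam p.
Proof. by move=> pT; exists set0; split => //; split => [x /= /(_ (pT x))|P _]. Qed.

Lemma qsS p p' : (forall x, p x -> p' x) -> qs Fam p -> qs Fam p'.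
Proof.
move=> pp' [M [mM [pM FamM]]]; exists M; split => //; split => // x np'.
by apply: pM => /pp'.
Qed.

Lemma qs_and p p' : qs Fam p -> qs Fam p' -> qs Fam (fun x => p x /\ p' x).
Proof.
move=> [M [mM [pM FamM]]] [M' [mM' [pM' FamM']]].
exists (M `|` M'); split; first exact: measurableU.
split=> [x /not_andP[/pM|/pM']|P FP]; [by left|by right|].
suff /(measure_negligible (measurableU _ _ mM mM')) -> : P.-negligible (M `|` M') by [].
by apply: negligibleU; [exists M | exists M']; split => //; [exact: FamM | exact: FamM'].
Qed.

Lemma qs_le_on_supports (u v : T -> R) :
  measurable_fun setT u -> measurable_fun setT v ->
  (forall Q, Qs Q -> {ae Q, forall x, S Q x -> u x <= v x}) ->
  qs Fam (fun x => u x <= v x).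
Proof.
move=> mu mv uv; apply: (qs_on_supports (M := [set x | v x < u x])).
- exact: measurable_ltr.
- by move=> x /negP; rewrite -ltNge.
- move=> Q HQ; apply: filterS (uv Q HQ) => x uvx /uvx.
  by rewrite leNgt => /negP.
Qed.

Lemma qs_eq_on_supportP Q (u v : T -> R) : Qs Q ->
  measurable_fun setT u -> measurable_fun setT v ->
  qs Fam (fun x => u x * \1_(S Q) x = v x * \1_(S Q) x) <->
  {ae Q, forall x, S Q x -> u x = v x}.
Proof.
move=> HQ mu mv; split => [/qs_ae/(_ HQ)|uv].
  by apply: filterS => x + Sx; rewrite indicE mem_set // !mulr1.
apply: (qs_on_supports (M := [set x | u x * \1_(S Q) x <> v x * \1_(S Q) x])) => //.
  have mS := measurable_support HQ.
  by apply: measurable_neqr; apply: measurable_funM => //; exact: measurable_indic.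
move=> Q' HQ'; have [<-|QQ'] := pselect (Q = Q').
  by apply: filterS uv => x uvx Sx; rewrite /= indicE mem_set // !mulr1 uvx.
apply: filterS (ae_other_support HQ HQ' QQ') => x nSx _.
by rewrite /= indicE memNset // !mulr0.
Qed.

Lemma Linf_cst (c : R) : Linf Fam (cst c).
Proof. by split => //; exists `|c|; apply: qsW. Qed.

Lemma Linf_indic A : measurable A -> Linf Fam (\1_A).
Proof.
move=> mA; split; first exact: measurable_indic.
by exists 1; apply: qsW => x; rewrite indicE; case: (_ \in _); rewrite ?normr1 ?normr0.
Qed.

End pre_hahn_localizable.

Section proposition3p3.
Context d (T : measurableType d) (R : realType).
Variables (Fam Qs : set (probability T R)) (S : probability T R -> set T).
Hypothesis hP : pre_hahn_localizable Fam Qs S.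
Implicit Types (Q : probability T R).

Lemma hahn_sup_on_support E S0 :
  (forall Q, Qs Q -> measurable (E Q) /\ E Q `<=` S Q) -> measurable S0 ->
  (forall F, measurable F -> (forall Q, Qs Q -> Q (E Q `\` F) = 0%E) ->
    forall Q, Qs Q -> Q (S0 `\` F) = 0%E) ->
  forall Q, Qs Q -> {ae Q, forall x, S0 x -> S Q x -> E Q x}.
Proof.
move=> mE mS0 S0_min Q HQ; have [mEQ _] := mE Q HQ.
have mSE : measurable (S Q `\` E Q).
  by apply: measurableD => //; exact: (measurable_support hP HQ).
suff : Q (S0 `\` ~` (S Q `\` E Q)) = 0%E.
  move=> /(null_set_ae (measurableD mS0 (measurableC mSE))).
  apply: filterS => x SE S0x SQx; apply: contrapT => nEx.
  by apply: SE; split => // /(_ (conj SQx nEx)).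
apply: (S0_min _ _ _ _ HQ); first exact: measurableC.
move=> Q' HQ'; rewrite setDE setCK.
have [<-|QQ'] := pselect (Q = Q').
  suff -> : E Q `&` (S Q `\` E Q) = set0 by rewrite measure0.
  by apply/seteqP; split => // x [Ex [_]].
apply/negligibleP; first by apply: measurableI => //; case: (mE Q' HQ').
apply: ae_negligible; apply: filterS (ae_other_support hP HQ HQ' QQ').
by move=> x nSx [_ []].
Qed.

Lemma dedekind_complete_hahn_localizable :
  Linf_dedekind_complete Fam -> hahn_localizable Qs S.
Proof.
move=> DC E mE; have [[Q0 HQ0]|Qs0] := pselect (Qs !=set0); last first.
  by exists set0; split => //; split => [Q HQ|F _ _ Q HQ]; exfalso; apply: Qs0; exists Q.
pose A := [set \1_(E Q) | Q in Qs] : set (T -> R).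
have A_Linf : A `<=` Linf Fam.
  by move=> _ [Q HQ <-]; apply: Linf_indic; case: (mE Q HQ).
have A_le1 : exists h, Linf Fam h /\ forall f, A f -> qs Fam (fun x => f x <= h x).
  exists (cst 1); split; first exact: Linf_cst.
  by move=> _ [Q _ <-]; apply: qsW => x; rewrite indicE; case: (_ \in _).
have [g [[mg _] [g_ub g_min]]] := DC A A_Linf (ex_intro _ _ (imageP _ HQ0)) A_le1.
(* the indicators take values in {0, 1}, so any threshold in (0, 1) would do *)
exists [set x | 2^-1 < g x]; split; first exact: measurable_ltr.
split => [Q HQ|F mF EF Q HQ].
  have [mEQ _] := mE Q HQ; apply/negligibleP; first exact/measurableD/measurable_ltr.
  apply: ae_negligible; apply: filterS (qs_ae hP (g_ub _ (imageP _ HQ)) HQ).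
  move=> x + [EQx]; rewrite /= indicE mem_set //= => g_ge /negP.
  by rewrite -leNgt => g_le; lra.
have F_ub f : A f -> qs Fam (fun x => f x <= \1_F x).
  move=> [Q' HQ' <-]; have [mEQ' EQ'S] := mE Q' HQ'.
  apply: (qs_le_on_supports hP); [exact: measurable_indic..|move=> Q'' HQ''].
  have [<-|QQ'] := pselect (Q' = Q''); last first.
    apply: filterS (ae_other_support hP HQ' HQ'' QQ') => x nSx _.
    have nEx : ~ E Q' x by move/EQ'S.
    by rewrite indicE memNset //=; case: (x \in F).
  have := null_set_ae (measurableD mEQ' mF) (EF Q' HQ').
  apply: filterS => x EF' _; rewrite !indicE.
  have [Ex|nEx] := pselect (E Q' x); last by rewrite memNset //=; case: (x \in F).
  have Fx : F x by apply: contrapT => nFx; exact: EF'.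
  by rewrite !mem_set.
apply/negligibleP; first exact/measurableD/mF/measurable_ltr.
apply: ae_negligible; apply: filterS (qs_ae hP (g_min _ (Linf_indic _ mF) F_ub) HQ).
by move=> x + [/= g_gt Fx]; rewrite indicE memNset //= => g_le; lra.
Qed.

Lemma hahn_localizable_gluing : hahn_localizable Qs S -> gluing_property Fam Qs S.
Proof.
move=> HL g g_meas [c g_le] _.
pose c' := Num.max c 0; have c'0 : 0 <= c' by rewrite le_max lexx orbT.
pose E n Q := S Q `&` [set x | rat_level c' n < g Q x].
have mE n Q : Qs Q -> measurable (E n Q) /\ E n Q `<=` S Q.
  move=> HQ; split; last exact: subIsetl.
  apply: measurableI; first exact: (measurable_support hP HQ).
  by apply: measurable_ltr => //; case: (g_meas Q HQ).
have [SS HSS] := choice (fun n => HL (E n) (mE n)).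
have mSS n : measurable (SS n) by case: (HSS n).
exists (level_sup c' SS); split.
  split; first exact: measurable_level_sup.
  exists c'; apply: qsW => x.
  by rewrite ger0_norm ?level_sup_ge0 ?level_sup_lec.
move=> Q HQ; have [mgQ gQ0] := g_meas Q HQ.
apply/(qs_eq_on_supportP hP HQ (measurable_level_sup c' mSS) mgQ).
have E_sub n : {ae Q, forall x, E n Q x -> SS n x}.
  have [mEn _] := mE n Q HQ; case: (HSS n) => _ [/(_ Q HQ) + _].
  move=> /(null_set_ae (measurableD mEn (mSS n))).
  by apply: filterS => x ESS Ex; apply: contrapT => nSS; exact: ESS.
have E_sup n : {ae Q, forall x, SS n x -> S Q x -> E n Q x}.
  by case: (HSS n) => _ [_ S0_min]; exact: hahn_sup_on_support (mE n) (mSS n) S0_min Q HQ.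
have g_le_c := qs_ae hP (g_le Q HQ) HQ.
near=> x => SQx.
have gQc : g Q x <= c' by rewrite le_max (near g_le_c x).
apply: level_sup_eq => // n; split => [lt_g|SSx].
  by apply: (near (ae_foralln E_sub) x).
by case: (near (ae_foralln E_sup) x _ n SSx SQx).
Unshelve. all: by end_near. Qed.

Section glued_supremum.
Variables (A : set (T -> R)) (a b : R) (gs : probability T R -> T -> R) (G : T -> R).
Hypotheses (mA : forall f, A f -> measurable_fun setT f) (mG : measurable_fun setT G).
Hypothesis G_gs : forall Q, Qs Q -> {ae Q, forall x, S Q x -> G x = gs Q x}.

Lemma glued_ub : (forall f, A f -> qs Fam (fun x => f x <= b)) ->
  (forall Q f, Qs Q -> A f -> {ae Q, forall x, clip a b (f x) <= gs Q x}) ->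
  forall f, A f -> qs Fam (fun x => f x <= G x - a).
Proof.
move=> A_le gs_ub f Af.
apply: (qs_le_on_supports hP (mA Af)); first exact: measurable_funB.
move=> Q HQ; have f_le := qs_ae hP (A_le f Af) HQ.
have G_eq := G_gs HQ; have gs_ubf := gs_ub Q f HQ Af.
near=> x => SQx; have -> : G x = gs Q x by apply: (near G_eq x).
by rewrite (le_trans (le_clipB a (near f_le x _))) // lerD2r (near gs_ubf x _).
Unshelve. all: by end_near. Qed.

Lemma glued_least f0 : A f0 -> qs Fam (fun x => - a <= f0 x) ->
  (forall Q, Qs Q -> exists j : nat -> nat -> T -> R, (forall n k, A (j n k)) /\
     forall x y, 0 <= y -> (forall n k, clip a b (j n k x) <= y) -> gs Q x <= y) ->
  forall h, measurable_fun setT h -> (forall f, A f -> qs Fam (fun x => f x <= h x)) ->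
  qs Fam (fun x => G x - a <= h x).
Proof.
move=> Af0 f0_ge gs_least h mh h_ub.
apply: (qs_le_on_supports hP) => //; first exact: measurable_funB.
move=> Q HQ; have [j [Aj gs_le]] := gs_least Q HQ.
have h_ge_j : {ae Q, forall x, forall n k, j n k x <= h x}.
  by apply: ae_foralln => n; apply: ae_foralln => k; exact: (qs_ae hP (h_ub _ (Aj n k)) HQ).
have f0_le_h := qs_ae hP (h_ub f0 Af0) HQ; have a_le_f0 := qs_ae hP f0_ge HQ.
have G_eq := G_gs HQ.
near=> x => SQx; have -> : G x = gs Q x by apply: (near G_eq x).
rewrite lerBlDr.
have a_le_h : - a <= h x by rewrite (le_trans (near a_le_f0 x _)) // (near f0_le_h x _).
apply: gs_le; first by rewrite -lerBlDr sub0r.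
by move=> n k; rewrite -lerBlDr clipB_le // (near h_ge_j x _).
Unshelve. all: by end_near. Qed.

End glued_supremum.

Lemma gluing_dedekind_complete : gluing_property Fam Qs S -> Linf_dedekind_complete Fam.
Proof.
move=> glue A A_Linf [f0 Af0] [h0 [[_ [b h0_le]] A_le_h0]].
have [_ [a f0_le]] := A_Linf f0 Af0; have mA f : A f -> measurable_fun setT f by case/A_Linf.
pose a' := Num.max a 0; pose b' := Num.max b 0.
have a'0 : 0 <= a' by rewrite le_max lexx orbT.
have b'0 : 0 <= b' by rewrite le_max lexx orbT.
(* clipping makes [A] uniformly bounded and changes no [f] where [f <= h0 <= b] *)
pose cf (f : T -> R) := clip a' b' \o f.
have mcf f : A f -> measurable_fun setT (cf f) by move/mA/(measurable_clip a' b').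
have cf_bounds f x : A f -> 0 <= cf f x <= b' + a' by rewrite clip_ge0 ?clip_le.
have [gs gs_sup] := choice (fun Q : probability T R =>
  probability_ess_sup Q (addr_ge0 b'0 a'0) mcf cf_bounds Af0).
have [G [[mG [cG G_le]] G_gs]] : exists G, Linf Fam G /\ forall Q, Qs Q ->
    qs Fam (fun x => G x * \1_(S Q) x = gs Q x * \1_(S Q) x * \1_(S Q) x).
  apply: glue => [Q HQ||Q HQ]; last by apply: qsW => x nSx; rewrite indicE memNset // mulr0.
    have [mgs gs_bounds _ _] := gs_sup Q; split => [|x].
      by apply: measurable_funM => //; exact/measurable_indic/(measurable_support hP HQ).
    by have /andP[? _] := gs_bounds x; rewrite mulr_ge0 // indicE.
  exists (b' + a') => Q HQ; apply: qsW => x; have [_ gs_bounds _ _] := gs_sup Q.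
  have /andP[? gsK] := gs_bounds x; rewrite indicE.
  by case: (_ \in _); rewrite ?mulr1 ?mulr0 // addr_ge0.
have G_eq Q : Qs Q -> {ae Q, forall x, S Q x -> G x = gs Q x}.
  move=> HQ; have [mgs _ _ _] := gs_sup Q; have mS := measurable_support hP HQ.
  have mgs1 : measurable_fun setT (fun x => gs Q x * \1_(S Q) x).
    by apply: measurable_funM => //; exact: measurable_indic.
  apply: filterS ((qs_eq_on_supportP hP HQ mG mgs1).1 (G_gs Q HQ)) => x + Sx.
  by move=> /(_ Sx) ->; rewrite indicE mem_set // mulr1.
exists (G \- cst a'); split; [|split].
- split; first exact: measurable_funB.
  exists (cG + a'); apply: qsS G_le => x GcG.
  by rewrite /= (le_trans (ler_normB _ _)) // (ger0_norm a'0) lerD2r.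
- apply: (glued_ub (b := b') mA mG G_eq) => [f Af|Q f HQ Af].
    apply: qsS (qs_and (A_le_h0 f Af) h0_le) => x [fh0 h0b].
    by rewrite le_max (le_trans fh0) // (le_trans (ler_norm _)).
  by have [_ _ + _] := gs_sup Q; apply.
- move=> h [mh _] h_ub.
  have f0_ge : qs Fam (fun x => - a' <= f0 x).
    apply: qsS f0_le => x f0a.
    by rewrite lerNl le_max (le_trans _ f0a) // -normrN ler_norm.
  apply: (glued_least (b := b') mG G_eq Af0 f0_ge _ mh h_ub) => Q HQ.
  by have [_ _ _] := gs_sup Q.
Qed.

End proposition3p3.

Theorem proposition3p3 (d : measure_display) (T : measurableType d) (R : realType)
  (Fam Qs : set (probability T R)) (S : probability T R -> set T) :
  sigma_convex Fam -> pre_hahn_localizable Fam Qs S ->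
  (hahn_localizable Qs S <-> Linf_dedekind_complete Fam) /\
  (Linf_dedekind_complete Fam <-> gluing_property Fam Qs S).
Proof.
move=> _ hP.
have DC_hahn := dedekind_complete_hahn_localizable hP.
have hahn_glue := hahn_localizable_gluing hP.
have glue_DC := gluing_dedekind_complete hP.
split; split.
- by move/hahn_glue/glue_DC.
- exact: DC_hahn.
- by move/DC_hahn/hahn_glue.
- exact: glue_DC.
Qed.
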